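(* Let $r_1,r_2,r_3,L>0$ with $r_2>\max(r_1,r_3)$. For positive $a,b$ with $r_2>\max(a,b)$ let $m_{a,b}(y)=a\mathbf 1_{y<0}+r_2\mathbf 1_{0\le y<1}+b\mathbf 1_{y\ge1}$ and $\lambda_1(a,b)=\sup\{\lambda : \exists\,\varphi\in W^{2,1}_{\mathrm{loc}}(\mathbb{R}),\ \varphi>0,\ L^{-2}\varphi''+(m_{a,b}+\lambda)\varphi\le0\}$. Then $\lambda_1(r_1,r_3)=\lambda_1(r_3,r_1)$. *)

From HB Require Import structures.
From mathcomp Require Import all_boot all_order all_algebra.
From mathcomp Require Import all_classical all_reals all_analysis.
Set Implicit Arguments. Unset Strict Implicit. Unset Printing Implicit Defensive.
Import Order.TTheory GRing.Theory Num.Theory.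
Import numFieldNormedType.Exports.
Local Open Scope classical_set_scope.
Local Open Scope ring_scope.

Section Defs.
Context {R : realType}.
Local Notation mu := (@lebesgue_measure R).

Definition test_fun (psi : R -> R) : Prop :=
  (forall (n : nat) (x : R), derivable (derive1n n psi) x 1) /\
  (exists M : R, forall x : R, M < `|x| -> psi x = 0).

Definition weak_deriv1 (phi g : R -> R) : Prop :=
  forall psi, test_fun psi ->
    (\int[mu]_x (phi x * derive1n 1 psi x)%:E = - \int[mu]_x (g x * psi x)%:E)%E.

Definition weak_deriv2 (phi g : R -> R) : Prop :=
  forall psi, test_fun psi ->
    (\int[mu]_x (phi x * derive1n 2 psi x)%:E = \int[mu]_x (g x * psi x)%:E)%E.

Definition W21loc_with (phi phi2 : R -> R) : Prop :=
  locally_integrable setT phi /\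
  (exists phi1 : R -> R, locally_integrable setT phi1 /\ weak_deriv1 phi phi1) /\
  locally_integrable setT phi2 /\ weak_deriv2 phi phi2.

Definition m_ab (r2 a b : R) (y : R) : R :=
  if y < 0 then a else if y < 1 then r2 else b.

(* admissible lambda: exists phi in W^{2,1}_loc (continuous representative),
   phi > 0, with L^{-2} phi'' + (m_{a,b} + lambda) phi <= 0 a.e. *)
Definition admissible (r2 L a b lam : R) : Prop :=
  exists phi phi2 : R -> R,
    continuous phi /\ (forall x, 0 < phi x) /\ W21loc_with phi phi2 /\
    {ae mu, forall x, L^-2 * phi2 x + (m_ab r2 a b x + lam) * phi x <= 0}.

Definition lambda1 (r2 L a b : R) : \bar R :=
  ereal_sup [set lam%:E | lam in [set lam : R | admissible r2 L a b lam]].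
End Defs.

From HB Require Import structures.
From mathcomp Require Import all_boot all_order all_algebra.
From mathcomp Require Import all_classical all_reals all_analysis.
From mathcomp Require Import ring lra measurable_realfun.
Import Order.TTheory GRing.Theory Num.Theory.
Import numFieldNormedType.Exports.
Local Open Scope ring_scope.
Local Open Scope classical_set_scope.

(* The reflection y |-> 1 - y preserves Lebesgue measure, test functions and
   the spaces W^{2,1}_loc (the weak second derivative is unchanged, the first
   changes sign), and it carries m_{a,b} to m_{b,a} outside the null set {0, 1}.
   Hence phi |-> phi(1 - .) maps every positive supersolution for (a, b) with
   parameter lambda to one for (b, a) with the same lambda, so both suprema are
   taken over the same set. *)

Section mirror.
Context {R : realType} (c : R).
Local Notation mu := (@lebesgue_measure R).

Definition mirror (x : R) : R := c - x.

Lemma mirrorK : involutive mirror.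
Proof. by move=> x; rewrite /mirror subKr. Qed.

Lemma preimage_mirror (A : set R) : mirror @^-1` A = mirror @` A.
Proof.
apply/seteqP; split => [x Ax|_ [y Ay <-]] /=; last by rewrite mirrorK.
by exists (mirror x); rewrite ?mirrorK.
Qed.

Lemma preimage_mirrorK (A : set R) : mirror @^-1` (mirror @^-1` A) = A.
Proof. by apply/seteqP; split => x /=; rewrite mirrorK. Qed.

Lemma continuous_mirror : continuous mirror.
Proof. by move=> x; apply: continuousB; [exact: cvg_cst|exact: cvg_id]. Qed.

Lemma measurable_mirror :
  measurable_fun [set: measurableTypeR R] (mirror : measurableTypeR R -> measurableTypeR R).
Proof. exact: continuous_measurable_fun continuous_mirror. Qed.

Lemma pushforward_mirror (A : set (measurableTypeR R)) : measurable A ->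
  pushforward mu (mirror : _ -> measurableTypeR R) A = mu A.
Proof.
move=> mA; apply/esym/lebesgue_measure_unique => //=; first exact: measurable_mirror.
move=> _ _ [[a b]] _ <-; rewrite /pushforward.
have -> : mirror @^-1` `]a, b] = `[c - b, c - a[.
  by apply/seteqP; split => x /=; rewrite /mirror !in_itv /= => /andP[? ?];
    apply/andP; split; lra.
rewrite !lebesgue_measure_itv/= !lte_fin ltrD2l ltrN2.
by case: ifP => // _; rewrite -!EFinD; congr (_%:E); ring.
Qed.

(* Through the positive and negative parts of [f], so that no integrability is needed. *)
Lemma integral_mirror (D : set R) (f : R -> \bar R) : measurable D ->
  measurable_fun [set: R] f ->
  (\int[mu]_(x in D) f x = \int[mu]_(x in mirror @^-1` D) f (mirror x))%E.
Proof.
move=> mD mf.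
have ge0_mirror g : measurable_fun [set: R] g -> (forall x, 0 <= g x)%E ->
    (\int[mu]_(x in D) g x = \int[mu]_(x in mirror @^-1` D) g (mirror x))%E.
  move=> mg g0; rewrite -(ge0_integral_pushforward measurable_mirror mu mD
    (measurable_funTS mg)) //.
  apply: eq_measure_integral => [|? A mA _]; first exact: measurable_mirror.
  exact: (esym (pushforward_mirror _ mA)).
rewrite integralE [RHS]integralE !ge0_mirror //.
- by rewrite (funepos_comp f mirror) (funeneg_comp f mirror).
- exact: measurable_funeneg.
- exact: measurable_funepos.
Qed.

Lemma integralT_mirror (f : R -> R) : measurable_fun [set: R] f ->
  (\int[mu]_x (f x)%:E = \int[mu]_x (f (mirror x))%:E)%E.
Proof.
move=> mf; rewrite (integral_mirror setT (EFin \o f)) ?preimage_setT //.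
exact/measurable_EFinP.
Qed.

Lemma negligible_mirror (N : set R) :
  mu.-negligible N -> mu.-negligible (mirror @^-1` N).
Proof.
move=> [A [mA A0 NA]]; exists (mirror @^-1` A); split => //.
- by rewrite -[_ @^-1` _]setTI; exact: measurable_mirror.
- by have := pushforward_mirror _ mA; rewrite /pushforward A0 => ->.
- by move=> x /NA.
Qed.

Lemma ae_mirror {P : R -> Prop} :
  {ae mu, forall x, P x} -> {ae mu, forall x, P (mirror x)}.
Proof. by move/negligible_mirror; apply: negligibleS. Qed.

Lemma locally_integrable_mirror (f : R -> R) : locally_integrable setT f ->
  locally_integrable setT (fun x => f (mirror x)).
Proof.
move=> [mf oT fK]; split => //; first exact: (measurableT_comp mf measurable_mirror).
move=> K _ cK; have cK' : compact (mirror @^-1` K).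
  rewrite preimage_mirror; apply: continuous_compact => //.
  exact/continuous_subspaceT/continuous_mirror.
have := fK _ (subsetT _) cK'.
rewrite (integral_mirror _ (fun x => `|f x|%:E)); last 2 first.
- exact: compact_measurable.
- exact/measurable_EFinP/measurableT_comp.
by rewrite preimage_mirrorK.
Qed.

Lemma integralT_mirror_mul (f g : R -> R) :
  measurable_fun [set: R] f -> measurable_fun [set: R] g ->
  (\int[mu]_x (f (mirror x) * g x)%:E = \int[mu]_x (f x * g (mirror x))%:E)%E.
Proof.
move=> mf mg; rewrite integralT_mirror; last first.
  exact: measurable_funM (measurableT_comp mf measurable_mirror) mg.
by under eq_integral do rewrite mirrorK.
Qed.

Definition smooth (f : R -> R) := forall n x, derivable (derive1n n f) x 1.

Lemma derivable_mirror (x : R) : derivable mirror x 1.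
Proof. by apply: derivableB; [exact: derivable_cst|exact: derivable_id]. Qed.

Lemma derive1_mirror (x : R) : derive1 mirror x = -1.
Proof.
rewrite derive1E (_ : mirror = cst c - id) // deriveB //.
by rewrite derive_cst derive_id sub0r.
Qed.

Lemma derivable_scale_mirror (g : R -> R) (k x : R) :
  derivable g (mirror x) 1 -> derivable (fun y => k * g (mirror y)) x 1.
Proof.
move=> dg; apply: derivableM; first exact: derivable_cst.
apply/derivable1_diffP/(differentiable_comp (g := g)); last exact/derivable1_diffP.
exact/derivable1_diffP/derivable_mirror.
Qed.

Lemma derive1_scale_mirror (g : R -> R) (k x : R) : derivable g (mirror x) 1 ->
  derive1 (fun y => k * g (mirror y)) x = - k * derive1 g (mirror x).
Proof.
move=> dg; rewrite derive1Ml; last first.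
  by apply/derivable1_diffP/differentiable_comp; apply/derivable1_diffP => //;
    exact: derivable_mirror.
by rewrite (derive1_comp (derivable_mirror x) dg) derive1_mirror mulrN1 mulrN mulNr.
Qed.

Lemma derive1n_scale_mirror (psi : R -> R) (k : R) n : smooth psi ->
  derive1n n (fun y => k * psi (mirror y)) =
  (fun y => k * (-1) ^+ n * derive1n n psi (mirror y)).
Proof.
move=> spsi; elim: n => [|n IH]; first by apply/funext => y; rewrite expr0 mulr1.
rewrite derive1nS IH; apply/funext => x; rewrite derive1_scale_mirror //.
by rewrite derive1nS exprS; ring.
Qed.

Lemma test_fun_scale_mirror (psi : R -> R) (k : R) : test_fun psi ->
  test_fun (fun y => k * psi (mirror y)).
Proof.
move=> [spsi [M psiM]]; split.
  by move=> n x; rewrite derive1n_scale_mirror //; exact: derivable_scale_mirror.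
exists (M + `|c|) => x Mx; rewrite psiM ?mulr0 //.
rewrite -(ltrD2r `|c|) (lt_le_trans Mx) // addrC.
by have := ler_normB c (mirror x); rewrite -/(mirror _) mirrorK.
Qed.

Lemma measurable_derive1n (psi : R -> R) n : smooth psi ->
  measurable_fun [set: R] (derive1n n psi).
Proof.
move=> spsi; apply: continuous_measurable_fun => x.
exact/differentiable_continuous/derivable1_diffP.
Qed.

Lemma weak_deriv1_mirror (phi g : R -> R) :
  measurable_fun [set: R] phi -> measurable_fun [set: R] g ->
  weak_deriv1 phi g -> weak_deriv1 (fun x => phi (mirror x)) (fun x => - g (mirror x)).
Proof.
move=> mphi mg dphi psi tpsi; have spsi : smooth psi by case: tpsi.
have := dphi _ (test_fun_scale_mirror _ (-1) tpsi).
rewrite derive1n_scale_mirror // => eq_int.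
rewrite integralT_mirror_mul //; last exact: measurable_derive1n.
rewrite (integralT_mirror_mul (fun y => - g y)); last 2 first.
- exact: measurableT_comp.
- exact: (measurable_derive1n _ 0 spsi).
move: eq_int; under eq_integral do rewrite expr1 mulrNN !mul1r.
under [X in _ = (- X)%E -> _]eq_integral do rewrite mulN1r mulrN.
by under [X in _ -> _ = (- X)%E]eq_integral do rewrite mulNr.
Qed.

Lemma weak_deriv2_mirror (phi g : R -> R) :
  measurable_fun [set: R] phi -> measurable_fun [set: R] g ->
  weak_deriv2 phi g -> weak_deriv2 (fun x => phi (mirror x)) (fun x => g (mirror x)).
Proof.
move=> mphi mg dphi psi tpsi; have spsi : smooth psi by case: tpsi.
have := dphi _ (test_fun_scale_mirror _ 1 tpsi).
rewrite derive1n_scale_mirror // => eq_int.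
rewrite integralT_mirror_mul //; last exact: measurable_derive1n.
rewrite integralT_mirror_mul //; last exact: (measurable_derive1n _ 0 spsi).
move: eq_int; under eq_integral do rewrite sqrrN expr1n !mul1r.
by under [X in _ = X -> _]eq_integral do rewrite mul1r.
Qed.

Lemma W21loc_with_mirror (phi phi2 : R -> R) : W21loc_with phi phi2 ->
  W21loc_with (fun x => phi (mirror x)) (fun x => phi2 (mirror x)).
Proof.
move=> [liphi [[phi1 [liphi1 dphi]] [liphi2 d2phi]]].
have [mphi _ _] := liphi; have [mphi1 _ _] := liphi1; have [mphi2 _ _] := liphi2.
split; first exact: locally_integrable_mirror.
split; last by split; [exact: locally_integrable_mirror|exact: weak_deriv2_mirror].
exists (fun x => - phi1 (mirror x)); split; last exact: weak_deriv1_mirror.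
exact/locally_integrableN/locally_integrable_mirror.
Qed.
End mirror.

Section symmetric_profile.
Context {R : realType}.
Local Notation mu := (@lebesgue_measure R).

Lemma m_ab_mirror (r2 a b x : R) : x != 0 -> x != 1 ->
  m_ab r2 a b (mirror 1 x) = m_ab r2 b a x.
Proof.
rewrite /m_ab /mirror => x0 x1.
have [xlt0|xgt0|x_eq0] := ltgtP x 0; last by rewrite x_eq0 eqxx in x0.
  by rewrite !ifF //; apply/negbTE; rewrite -leNgt; lra.
have [xlt1|xgt1|x_eq1] := ltgtP x 1; last by rewrite x_eq1 eqxx in x1.
  by rewrite ifF ?ifT //; [lra|apply/negbTE; rewrite -leNgt; lra].
by rewrite ifT //; lra.
Qed.

Lemma ae_m_ab_mirror (r2 a b : R) :
  {ae mu, forall x, m_ab r2 a b (mirror 1 x) = m_ab r2 b a x}.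
Proof.
have negligible1 (y : R) : mu.-negligible [set y].
  by exists [set y]; split => //; rewrite lebesgue_measure_set1.
apply: negligibleS (negligibleU (negligible1 0) (negligible1 1)) => x /= neq.
have [->|x0] := eqVneq x 0; first by left.
have [->|x1] := eqVneq x 1; first by right.
by case: neq; exact: m_ab_mirror.
Qed.

Lemma admissible_mirror (r2 L a b lam : R) :
  admissible r2 L a b lam -> admissible r2 L b a lam.
Proof.
move=> [phi [phi2 [cphi [phi_gt0 [Wphi ineq]]]]].
exists (fun x => phi (mirror 1 x)), (fun x => phi2 (mirror 1 x)).
split; [|split; [|split]].
- by move=> x; apply: continuous_comp; [exact: continuous_mirror|exact: cphi].
- by move=> x.
- exact: W21loc_with_mirror.
- apply: (filterS2 (F := almost_everywhere mu)) (ae_mirror 1 ineq)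
    (ae_m_ab_mirror r2 a b) => x.
  by move=> + <-.
Qed.

End symmetric_profile.

Theorem proposition4p3 (R : realType) (r1 r2 r3 L : R) :
  0 < r1 -> 0 < r2 -> 0 < r3 -> 0 < L -> Num.max r1 r3 < r2 ->
  lambda1 r2 L r1 r3 = lambda1 r2 L r3 r1.
Proof.
move=> _ _ _ _ _; rewrite /lambda1; congr ereal_sup.
by apply/seteqP; split => _ [lam adm <-]; exists lam => //; exact: admissible_mirror.
Qed.
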